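(* In the standard LLP setup, suppose $K=\overline{K}$. If either $N_u(L(G))$ is defined and $N\ge N_u(L(G))+1$, or $N_u(K)$ is defined and $N\ge N_u(K)+2$, then $L(G,\gamma^N_{optm})=\overline{K^\uparrow}$.
   Context: Standard LLP setup. $\Sigma=\Sigma_c\,\dot\cup\,\Sigma_{uc}$ is a finite alphabet partitioned into controllable and uncontrollable events. The plant $G$ has generated language $L(G)$ and marked language $L_m(G)$ with $L(G)=\overline{L_m(G)}$ ($\overline{M}$ = set of prefixes of strings in $M$). The legal language $K\subseteq L_m(G)$ satisfies $K=\overline{K}\cap L_m(G)$. For a prefix-closed $L$, $M$ is controllable w.r.t. $L$ if $\overline{M}\Sigma_{uc}\cap L\subseteq\overline{M}$; $K^\uparrow$ is the supremal sublanguage of $K$ controllable w.r.t. $L(G)$. For a language $L$ and $s\in\Sigma^*$: $L/s=\{t: st\in L\}$; $L|_N=\{t\in L:|t|\le N\}$; $\Sigma_{L(G)}(s)=\{\sigma\in\Sigma: s\sigma\in L(G)\}$. $M^{\uparrow/s|_N}$ is the supremal sublanguage of $M$ controllable w.r.t. $L(G)/s|_N$. Optimistic attitude: $f^N_{optm}(s)=[K/s|_N\cup(\overline{K}/s|_N\setminus\overline{K}/s|_{N-1})]^{\uparrow/s|_N}$; control policy $\gamma^N_{optm}(s)=(\overline{f^N_{optm}(s)}\cap\Sigma)\cup(\Sigma_{uc}\cap\Sigma_{L(G)}(s))$. Closed-loop language $L(G,\gamma)$: $\epsilon\in L(G,\gamma)$, and $s\sigma\in L(G,\gamma)$ iff $s\in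 L(G,\gamma)$, $s\sigma\in L(G)$, $\sigma\in\gamma(s)$. For a language $L$, $N_u(L)=\max\{|t|: t\in\Sigma_{uc}^*,\ \exists u,v\in\Sigma^*,\ utv\in L\}$, the length of the longest string of uncontrollable events occurring as a substring of a string of $L$, if this maximum exists; otherwise $N_u(L)$ is undefined. *)

From mathcomp Require Import all_boot.
Set Implicit Arguments. Unset Strict Implicit. Unset Printing Implicit Defensive.

Definition lang (Sigma : finType) := seq Sigma -> Prop.

Section LLP.
Variable Sigma : finType.
Implicit Types (L M : lang Sigma) (s t : seq Sigma).

Definition lsub L M := forall t, L t -> M t.
Definition lequiv L M := forall t, L t <-> M t.
Definition lunion L M : lang Sigma := fun t => L t \/ M t.
Definition linter L M : lang Sigma := fun t => L t /\ M t.
Definition ldiff L M : lang Sigma := fun t => L t /\ ~ M t.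

Definition pclos M : lang Sigma := fun t => exists u, M (t ++ u).
Definition lquot L s : lang Sigma := fun t => L (s ++ t).
Definition ltrunc L (N : nat) : lang Sigma := fun t => L t /\ size t <= N.
(* L|_{N-1} with integer N-1, i.e. strings of length < N (empty for N = 0) *)
Definition ltrunc_pred L (N : nat) : lang Sigma := fun t => L t /\ size t < N.

(* uc : the uncontrollable events; controllable events are ~~ uc *)
Definition controllable (uc : pred Sigma) M L :=
  forall t sigma, pclos M t -> uc sigma -> L (rcons t sigma) ->
    pclos M (rcons t sigma).

Definition supcon (uc : pred Sigma) M L : lang Sigma :=
  fun t => exists M', lsub M' M /\ controllable uc M' L /\ M' t.

Definition f_optm (uc : pred Sigma) (LG K : lang Sigma) (N : nat) s
  : lang Sigma :=
  supcon uc
    (lunion (ltrunc (lquot K s) N)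
            (ldiff (ltrunc (lquot (pclos K) s) N)
                   (ltrunc_pred (lquot (pclos K) s) N)))
    (ltrunc (lquot LG s) N).

Definition gamma_optm (uc : pred Sigma) (LG K : lang Sigma) (N : nat) s
  (sigma : Sigma) : Prop :=
  pclos (f_optm uc LG K N s) [:: sigma] \/ (uc sigma /\ LG (rcons s sigma)).

Inductive closed_loop (LG : lang Sigma) (gamma : seq Sigma -> Sigma -> Prop)
  : seq Sigma -> Prop :=
| cl_nil : closed_loop LG gamma [::]
| cl_snoc s sigma : closed_loop LG gamma s -> LG (rcons s sigma) ->
    gamma s sigma -> closed_loop LG gamma (rcons s sigma).

(* N_u(L) is defined and equals m *)
Definition Nu_is (uc : pred Sigma) L (m : nat) : Prop :=
  (exists t u v, all uc t /\ L (u ++ t ++ v) /\ size t = m) /\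
  (forall t u v, all uc t -> L (u ++ t ++ v) -> size t <= m).

End LLP.

From mathcomp Require Import all_boot.
From mathcomp Require Import zify.
Set Implicit Arguments. Unset Strict Implicit. Unset Printing Implicit Defensive.

(* For a prefix-closed legal language K and a prefix-closed plant
   language L(G), the prefix closure of the supremal controllable sublanguage
   K^ is the language [uc_safe] of strings s in K such that no uncontrollable
   continuation v of a prefix p of s, with pv in L(G), leaves K.  This is
   proved first ([pclos_supcon_uc_safe]): [uc_safe] is itself a controllable
   sublanguage of K, and every controllable sublanguage of K is contained in
   it, because controllability propagates along uncontrollable strings
   ([controllable_uc_closure]).
   The theorem then reduces to L(G, gamma) = [uc_safe], proved by induction on
   strings.  An event enabled by gamma after a safe string keeps it safe: an
   uncontrollable one by safety itself, a controllable one because the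
   look-ahead window of length N is long enough to see every uncontrollable
   continuation ([horizon_covers], which is where the bounds on N_u enter).
   Conversely, after a safe string every controllable event that keeps it
   safe is enabled, witnessed by the safe strings of length at most N. *)

Section PrefixClosure.
Variable Sigma : finType.

Definition prefix_closed (L : lang Sigma) : Prop :=
  forall t u, L (t ++ u) -> L t.

Lemma lequiv_pclos_prefix_closed (L M : lang Sigma) :
  lequiv L (pclos M) -> prefix_closed L.
Proof.
move=> LM t u /LM [w Mw]; apply/LM; exists (u ++ w); by rewrite catA.
Qed.

End PrefixClosure.

Section UncontrollableSafety.
Variables (Sigma : finType) (uc : pred Sigma) (LG K : lang Sigma).
Implicit Types (M L : lang Sigma) (s t p q u v w : seq Sigma).

Definition uc_safe : lang Sigma := fun s =>
  K s /\ forall p q v, s = p ++ q -> all uc v -> LG (p ++ v) -> K (p ++ v).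

Lemma uc_safe_step t u x :
  uc_safe (t ++ u) -> uc x -> LG (rcons t x) -> uc_safe (rcons t x).
Proof.
move=> [_ Sp] ux LGx; split.
  rewrite -cats1; apply: (Sp t u [:: x]) => //=; [by rewrite ux | by rewrite cats1].
move=> p q v; case/lastP: q => [|q y].
  rewrite cats0 => <- uv LGv; rewrite cat_rcons; apply: (Sp t u) => //=.
    by rewrite ux uv.
  by rewrite -cat_rcons.
rewrite -rcons_cat => /rcons_inj [Et _]; apply: (Sp p (q ++ u)); by rewrite Et catA.
Qed.

Lemma uc_safe_controllable : controllable uc uc_safe LG.
Proof.
move=> t x [u Su] ux LGx; exists [::]; rewrite cats0; exact: uc_safe_step Su ux LGx.
Qed.

Lemma uc_safe_extend s x :
  uc_safe s -> LG (rcons s x) ->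
  (forall v, all uc v -> LG (s ++ x :: v) -> K (s ++ x :: v)) ->
  uc_safe (rcons s x).
Proof.
move=> [_ Ss] LGx ext; split.
  by rewrite -cats1; apply: ext => //; rewrite cats1.
move=> p q v; case/lastP: q => [|q y].
  by rewrite cats0 => <-; rewrite cat_rcons; exact: ext.
by rewrite -rcons_cat => /rcons_inj [Es _]; exact: (Ss p q).
Qed.

Lemma controllable_uc_closure M L p v :
  controllable uc M L -> pclos M p -> all uc v ->
  (forall w z r, v = rcons w z ++ r -> pclos M (p ++ w) -> L (p ++ rcons w z)) ->
  pclos M (p ++ v).
Proof.
move=> Mcon Mp; elim/last_ind: v => [|v z IH]; first by rewrite cats0.
rewrite all_rcons => /andP [uz uv] guard.
have Mpv : pclos M (p ++ v).
  by apply: IH uv _ => w y r Ev; apply: guard; rewrite Ev rcons_cat.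
rewrite -rcons_cat; apply: Mcon => //; rewrite rcons_cat.
by apply: (guard v z [::]) => //; rewrite cats0.
Qed.

Hypothesis Kpc : prefix_closed K.

Lemma uc_safe_prefix_closed : prefix_closed uc_safe.
Proof.
move=> t u [Ktu Sp]; split; first exact: Kpc Ktu.
move=> p q v Et; apply: (Sp p (q ++ u)); by rewrite Et catA.
Qed.

Hypothesis LGpc : prefix_closed LG.

Lemma controllable_sub_uc_safe M s :
  lsub M K -> controllable uc M LG -> pclos M s -> uc_safe s.
Proof.
move=> MK Mcon [u Msu]; split; first exact: Kpc (MK _ Msu).
move=> p q v Es uv LGpv.
have Mp : pclos M p by exists (q ++ u); rewrite catA -Es.
have [w Mw] : pclos M (p ++ v).
  apply: controllable_uc_closure Mcon Mp uv _ => w z r Ev _.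
  by apply: (@LGpc _ r); rewrite -catA -Ev.
exact: Kpc (MK _ Mw).
Qed.

Lemma pclos_supcon_uc_safe : lequiv (pclos (supcon uc K LG)) uc_safe.
Proof.
move=> s; split.
  by case=> u [M [MK [Mcon Msu]]]; apply: (controllable_sub_uc_safe MK Mcon); exists u.
move=> Ss; exists [::]; rewrite cats0; exists uc_safe.
by split; [move=> t [] | split; [exact: uc_safe_controllable | ]].
Qed.

Variable N : nat.

Lemma f_optm_in_K s w : pclos (f_optm uc LG K N s) w -> K (s ++ w).
Proof.
case=> u [M [MX [_ Mwu]]].
have [u' Ku'] : pclos K (s ++ (w ++ u)).
  case: (MX _ Mwu) => [[Kwu _] | [[Kwu _] _]] //; by exists [::]; rewrite cats0.
by apply: (@Kpc _ (u ++ u')); move: Ku'; rewrite -!catA.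
Qed.

(* The look-ahead window N sees every uncontrollable run that follows an
   event x appended to a string, once the run so far stays legal. *)
Definition horizon_covers : Prop :=
  forall s x w z, all uc (rcons w z) -> LG (s ++ x :: rcons w z) ->
    K (s ++ x :: w) -> size (x :: rcons w z) <= N.

Lemma Nu_horizon_covers :
  (exists m, Nu_is uc LG m /\ m + 1 <= N) \/
  (exists m, Nu_is uc K m /\ m + 2 <= N) -> horizon_covers.
Proof.
case=> -[m [[_ Nu_max] mN]] s x w z uwz LGwz Kw.
  move: (Nu_max (rcons w z) (rcons s x) [::]).
  by rewrite cats0 cat_rcons /= size_rcons => /(_ uwz LGwz); lia.
move: uwz (Nu_max w (rcons s x) [::]); rewrite all_rcons => /andP [_ uw].
by rewrite cats0 cat_rcons /= size_rcons => /(_ uw Kw); lia.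
Qed.

Hypothesis horizon : horizon_covers.

Lemma gamma_optm_uc_safe s x :
  uc_safe s -> gamma_optm uc LG K N s x ->
  forall v, all uc v -> LG (s ++ x :: v) -> K (s ++ x :: v).
Proof.
move=> [_ Ss]; case=> [[u0 [M [MX [Mcon Mxu]]]] | [ux _]] v uv LGv; last first.
  by apply: (Ss s [::]) => //=; [rewrite cats0 | rewrite ux uv].
have MK w : pclos M w -> K (s ++ w).
  by case=> u Mwu; apply: f_optm_in_K; exists u, M.
apply: (MK (x :: v)); apply: (controllable_uc_closure (p := [:: x]) Mcon) => //.
  by exists u0.
move=> w z r Ev Mxw.
have LGwz : LG (s ++ x :: rcons w z).
  by apply: (@LGpc _ r); rewrite -catA /= -Ev.
split; first exact: LGwz.
apply: horizon LGwz (MK _ Mxw).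
by move: uv; rewrite Ev all_cat => /andP [].
Qed.

Lemma closed_loop_sub_uc_safe s :
  uc_safe [::] -> closed_loop LG (gamma_optm uc LG K N) s -> uc_safe s.
Proof.
move=> S0; elim=> [|t x _ St LGx gx] //.
by apply: uc_safe_extend => //; exact: gamma_optm_uc_safe.
Qed.

(* Safe controllable events are enabled: the safe strings of length at most N
   form a controllable sublanguage of the look-ahead window. *)
Lemma uc_safe_enabled s x :
  0 < N -> uc_safe (rcons s x) -> pclos (f_optm uc LG K N s) [:: x].
Proof.
move=> Npos Sx; exists [::], (fun t => uc_safe (s ++ t) /\ size t <= N).
split; first by move=> t [[Kt _] st]; left.
split; last by rewrite cats1.
move=> t y [u [Su _]] uy [LGy sy]; exists [::]; rewrite cats0; split=> //.
rewrite -rcons_cat; apply: (@uc_safe_step (s ++ t) u) => //.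
  by rewrite -catA.
by rewrite rcons_cat.
Qed.

Lemma uc_safe_sub_closed_loop s :
  lsub K LG -> 0 < N -> uc_safe s -> closed_loop LG (gamma_optm uc LG K N) s.
Proof.
move=> KLG Npos; elim/last_ind: s => [|s x IH] Sx; first exact: cl_nil.
have LGx : LG (rcons s x) by apply: KLG; case: Sx.
apply: cl_snoc => //.
  by apply: IH; apply: (@uc_safe_prefix_closed _ [:: x]); rewrite cats1.
case ux: (uc x); [by right | by left; exact: uc_safe_enabled].
Qed.

End UncontrollableSafety.

Theorem theorem9 (Sigma : finType) (uc : pred Sigma)
  (LG Lm K : lang Sigma) (N : nat) :
  lequiv LG (pclos Lm) ->
  lsub K Lm ->
  lequiv K (linter (pclos K) Lm) ->
  lequiv K (pclos K) ->
  (exists t, supcon uc K LG t) ->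
  ((exists m, Nu_is uc LG m /\ m + 1 <= N) \/
   (exists m, Nu_is uc K m /\ m + 2 <= N)) ->
  lequiv (closed_loop LG (gamma_optm uc LG K N)) (pclos (supcon uc K LG)).
Proof.
move=> LGeq KLm _ Keq [t St] HN.
have LGpc := lequiv_pclos_prefix_closed LGeq.
have Kpc := lequiv_pclos_prefix_closed Keq.
have KLG : lsub K LG by move=> w Kw; apply/LGeq; exists [::]; rewrite cats0; exact: KLm.
have Npos : 0 < N by case: HN => -[m [_ mN]]; lia.
have safeE := pclos_supcon_uc_safe uc Kpc LGpc.
have safe0 : uc_safe uc LG K [::] by apply/safeE; exists t.
have horizon := Nu_horizon_covers HN.
move=> s; split=> [cl | /safeE Ss].
  by apply/safeE; exact: closed_loop_sub_uc_safe cl.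
exact: uc_safe_sub_closed_loop.
Qed.
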